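(* Every monoid that can be embedded into a sofic group is strongly sofic.
   Context: Hamming metric on $\operatorname{Map}(D)$ (monoid of maps $D\to D$, $D$ finite non-empty): $d_D^{\mathrm{Ham}}(f,g)=\frac{1}{|D|}|\{v:f(v)\ne g(v)\}|$. A group $G$ is sofic if for every finite $K\subset G$ and $\varepsilon>0$ there are a non-empty finite set $D$ and a map $\sigma\colon G\to\mathrm{Sym}(D)$ with $\sigma(1_G)=\mathrm{Id}_D$, $d_D^{\mathrm{Ham}}(\sigma(k_1k_2),\sigma(k_1)\sigma(k_2))\le\varepsilon$ for $k_1,k_2\in K$, and $d_D^{\mathrm{Ham}}(\sigma(k_1),\sigma(k_2))\ge1-\varepsilon$ for distinct $k_1,k_2\in K$. A monoid $M$ is strongly sofic if for every finite $K\subset M$ there is an integer $\Delta_K\ge1$ such that for every $\varepsilon>0$ there exist a non-empty finite set $D$ and a map $\sigma\colon M\to\operatorname{Map}(D)$ with (1) $\sigma(1_M)=\mathrm{Id}_D$; (2) $d_D^{\mathrm{Ham}}(\sigma(k_1k_2),\sigma(k_1)\sigma(k_2))\le\varepsilon$ for $k_1,k_2\in K$; (3) $d_D^{\mathrm{Ham}}(\sigma(k_1),\sigma(k_2))\ge1-\varepsilon$ for distinct $k_1,k_2\in K$; (4) $|\sigma(k)^{-1}(v)|\le\Delta_K$ for $k\in K$, $v\in D$. A monoid embeds into a group if there is an injective monoid morphism into it. *)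

From Stdlib Require Import Reals List.
From mathcomp Require Import all_boot all_fingroup.
Set Implicit Arguments. Unset Strict Implicit. Unset Printing Implicit Defensive.

Record monoidType0 := {
  mcar :> Type;
  mmul : mcar -> mcar -> mcar;
  mone : mcar;
  mmulA : forall x y z, mmul x (mmul y z) = mmul (mmul x y) z;
  mmul1 : forall x, mmul mone x = x;
  mmul1r : forall x, mmul x mone = x
}.

Record groupType0 := {
  gcar :> Type;
  gmul : gcar -> gcar -> gcar;
  gone : gcar;
  ginv : gcar -> gcar;
  gmulA : forall x y z, gmul x (gmul y z) = gmul (gmul x y) z;
  gmul1 : forall x, gmul gone x = x;
  gmul1r : forall x, gmul x gone = x;
  gmulV : forall x, gmul (ginv x) x = gone;
  gmulVr : forall x, gmul x (ginv x) = gone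
}.

Definition hamming (D : finType) (f g : D -> D) : R :=
  Rdiv (INR #|[set v : D | f v != g v]|) (INR #|D|).

(* Sofic groups. Sym(D) = {perm D}; the product in Sym(D)/Map(D) is
   composition (f g)(v) = f (g v); K finite subset = a list. *)
Definition sofic (G : groupType0) : Prop :=
  forall (K : list G) (eps : R), Rlt 0 eps ->
  exists (D : finType) (sigma : G -> {perm D}),
    0 < #|D| /\
    sigma (gone G) = 1%g /\
    (forall k1 k2, In k1 K -> In k2 K ->
       Rle (hamming (sigma (gmul k1 k2)) (fun v => sigma k1 (sigma k2 v))) eps) /\
    (forall k1 k2, In k1 K -> In k2 K -> k1 <> k2 ->
       Rle (Rminus 1 eps) (hamming (sigma k1) (sigma k2))).

Definition strongly_sofic (M : monoidType0) : Prop :=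
  forall (K : list M), exists Delta : nat, 1 <= Delta /\
  forall eps : R, Rlt 0 eps ->
  exists (D : finType) (sigma : M -> {ffun D -> D}),
    0 < #|D| /\
    sigma (mone M) = [ffun v => v] /\
    (forall k1 k2, In k1 K -> In k2 K ->
       Rle (hamming (sigma (mmul k1 k2)) (fun v => sigma k1 (sigma k2 v))) eps) /\
    (forall k1 k2, In k1 K -> In k2 K -> k1 <> k2 ->
       Rle (Rminus 1 eps) (hamming (sigma k1) (sigma k2))) /\
    (forall k v, In k K -> #|[set x : D | sigma k x == v]| <= Delta).

Definition monoid_embedding (M : monoidType0) (G : groupType0) (f : M -> G) : Prop :=
  (forall x y, f x = f y -> x = y) /\
  f (mone M) = gone G /\
  (forall x y, f (mmul x y) = gmul (f x) (f y)).

From Stdlib Require Import Reals List.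
From mathcomp Require Import all_boot all_fingroup.

(* Restrict a sofic approximation of G along the embedding.  Its maps are
   permutations, whose fibres are singletons, so the bound Delta_K = 1 works
   for every K. *)

Lemma eq_hamming {D : finType} {f f' g g' : D -> D} :
  f =1 f' -> g =1 g' -> hamming f g = hamming f' g'.
Proof.
move=> eq_f eq_g; rewrite /hamming.
have -> : [set v | f v != g v] = [set v | f' v != g' v].
  by apply/setP => v; rewrite !inE eq_f eq_g.
by [].
Qed.

Lemma card_perm_fiber (D : finType) (s : {perm D}) (v : D) :
  #|[set x | s x == v]| = 1.
Proof.
have -> : [set x | s x == v] = [set (s^-1)%g v].
  by apply/setP => x; rewrite !inE; apply/eqP/eqP => [<-|->]; rewrite ?permK ?permKV.
exact: cards1.
Qed.

Theorem corollary3p5 (M : monoidType0) (G : groupType0) (f : M -> G) :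
  monoid_embedding f -> sofic G -> strongly_sofic M.
Proof.
move=> [f_inj [f1 fM]] sofG K; exists 1; split => // eps eps_gt0.
have [D [sg [D_gt0 [sg1 [sgM sg_sep]]]]] := sofG (map f K) eps eps_gt0.
exists D, (fun m => [ffun v => sg (f m) v]).
have ffunE_sg m : [ffun v => sg (f m) v] =1 sg (f m) by move=> v; rewrite ffunE.
split=> //; split.
  by apply/ffunP => v; rewrite !ffunE f1 sg1 perm1.
split.
  move=> k1 k2 K_k1 K_k2.
  rewrite (eq_hamming (f' := sg (gmul (f k1) (f k2)))
                      (g' := fun v => sg (f k1) (sg (f k2) v))).
  - exact: sgM (in_map f K k1 K_k1) (in_map f K k2 K_k2).
  - by move=> v; rewrite ffunE fM.
  - by move=> v; rewrite !ffunE.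
split.
  move=> k1 k2 K_k1 K_k2 k12.
  rewrite (eq_hamming (ffunE_sg k1) (ffunE_sg k2)).
  apply: sg_sep (in_map f K k1 K_k1) (in_map f K k2 K_k2) _.
  by move=> /f_inj.
move=> k v _.
under eq_finset do rewrite ffunE.
by rewrite card_perm_fiber.
Qed.
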